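(* Let a document collection $\mathcal{D}$ be partitioned into $n$ pairwise disjoint shards $D_1,\dots,D_n$, and let $r\ge1$ identical replicas of this partition be stored, each of the $nr$ shard replicas on its own node. Fix a query $q$ with a unique relevant document $d_q$, where $d_q$ is stored in $D_j$ with probability $p(j)$, $\sum_{j=1}^n p(j)=1$. Each node independently fails to respond with probability $f\in[0,1]$, independently of the location of $d_q$. The success probability of a selection of shard replicas is the probability that $d_q$ lies in a shard of which some selected replica responds. The rSmartRed selection assigns to the $i$-th replica of shard $D_j$ ($1\le i\le r$, $1\le j\le n$) the score $f^{i-1}p(j)$ and selects the $tr$ shard replicas with the highest scores (querying shard $D_j$ at as many replicas as the number of its selected pairs $(j,i)$). Then for every integer $tr$ with $1\le tr\le nr$, the rSmartRed selection of $tr$ shard replicas maximizes the success probability among all selections of $tr$ shard replicas.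
   Context: Distributed search model: each node searches only its own shard replica; the query is sent to the selected replicas, and results of nodes that fail to respond are dropped. Here $t$ and $r$ are positive integers and $tr$ is the budget of shard replicas to select. *)

From mathcomp Require Import all_boot all_order all_algebra.
Set Implicit Arguments. Unset Strict Implicit. Unset Printing Implicit Defensive.
Import Order.TTheory GRing.Theory Num.Theory.
Local Open Scope ring_scope.

(* A shard replica (node) is a pair (j, i): the (i+1)-th replica of shard D_(j+1)
   (0-based indices j : 'I_n, i : 'I_r). A selection is a set of nodes. *)

Definition fail_pattern_prob (R : realFieldType) (n r : nat) (f : R)
    (w : {ffun 'I_n * 'I_r -> bool}) : R :=
  \prod_(x : 'I_n * 'I_r) (if w x then f else 1 - f).

Definition success_prob (R : realFieldType) (n r : nat) (p : 'I_n -> R) (f : R)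
    (S : {set 'I_n * 'I_r}) : R :=
  \sum_(j : 'I_n) \sum_(w : {ffun 'I_n * 'I_r -> bool})
     p j * fail_pattern_prob f w * ([exists x in S, (x.1 == j) && ~~ w x] : bool)%:R.

Definition rscore (R : realFieldType) (n r : nat) (p : 'I_n -> R) (f : R)
    (x : 'I_n * 'I_r) : R := f ^+ x.2 * p x.1.

Definition is_rSmartRed (R : realFieldType) (n r : nat) (p : 'I_n -> R) (f : R)
    (k : nat) (S : {set 'I_n * 'I_r}) : Prop :=
  #|S| = k /\
  forall x y : 'I_n * 'I_r, x \in S -> y \notin S -> rscore p f y <= rscore p f x.

From mathcomp Require Import all_boot all_order all_algebra.
Set Implicit Arguments. Unset Strict Implicit. Unset Printing Implicit Defensive.
Import Order.TTheory GRing.Theory Num.Theory.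
Local Open Scope ring_scope.

(* If shard j is queried at c of its replicas, it contributes
   p(j)(1 - f^c) = (1 - f)(p(j) + f p(j) + ... + f^(c-1) p(j)) to the success probability,
   i.e. (1 - f) times the total score of the first c replicas of shard j. As f <= 1, any c
   replicas of a shard score at most as much as its first c, so (1 - f) times the total score
   of a selection bounds its success probability from below, with equality for selections
   that use the lowest-index replicas of every shard. Each selection has such a compact
   counterpart of the same size and success probability, and among sets of a given size a
   top-scoring set has maximal total score. *)

Lemma ler_sum_top (R : numDomainType) (T : finType) (F : T -> R) (S U : {set T}) :
  #|U| = #|S| -> (forall x y, x \in S -> y \notin S -> F y <= F x) ->
  \sum_(x in U) F x <= \sum_(x in S) F x.
Proof.
move=> cardU topS.
rewrite (big_setID S) [leRHS](big_setID U) /= setIC lerD2l.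
have cardD : #|U :\: S| = #|S :\: U|.
  by apply/eqP; rewrite -(eqn_add2l #|U :&: S|) cardsID setIC cardsID cardU.
have [k0 | k_gt0] := posnP #|S :\: U|.
  by rewrite (cards0_eq k0) (cards0_eq (etrans cardD k0)) !big_set0.
rewrite -(ler_pMn2r k_gt0).
have -> : (\sum_(y in U :\: S) F y) *+ #|S :\: U|
          = \sum_(x in S :\: U) \sum_(y in U :\: S) F y by rewrite sumr_const.
have -> : (\sum_(x in S :\: U) F x) *+ #|S :\: U|
          = \sum_(x in S :\: U) \sum_(y in U :\: S) F x.
  by rewrite -cardD -sumrMnl; apply: eq_bigr => x _; rewrite sumr_const.
apply: ler_sum => x; rewrite inE => /andP[_ xS].
by apply: ler_sum => y; rewrite inE => /andP[yNS _]; apply: topS.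
Qed.

Section OrdinalPrefix.

Variable r : nat.

Lemma big_ord_prefix (V : Type) (idx : V) (op : V -> V -> V) (F : nat -> V) (c : nat) :
  (c <= r)%N -> \big[op/idx]_(i in [set i : 'I_r | (i < c)%N]) F i = \big[op/idx]_(m < c) F m.
Proof. by move=> le_cr; rewrite (big_ord_widen _ _ le_cr); apply: eq_bigl => i; rewrite inE. Qed.

Lemma card_ord_prefix (c : nat) : (c <= r)%N -> #|[set i : 'I_r | (i < c)%N]| = c.
Proof.
by move=> le_cr; rewrite -sum1_card (big_ord_prefix _ _ (fun _ => 1%N)) // sum1_card card_ord.
Qed.

Lemma ler_sum_exprn_prefix (R : numDomainType) (x : R) (I : {set 'I_r}) :
  0 <= x -> x <= 1 -> \sum_(i in I) x ^+ i <= \sum_(m < #|I|) x ^+ m.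
Proof.
move=> x_ge0 x_le1; have [k cardI] : {k | #|I| = k} by exists #|I|.
rewrite cardI; elim: k I cardI => [|k IH] I cardI.
  by rewrite (cards0_eq cardI) big_set0 big_ord0.
have [i0 i0I] : exists i0, i0 \in I by apply/card_gt0P; rewrite cardI.
have [M MI maxM] := arg_maxnP (fun i : 'I_r => val i) i0I.
have {}MI : M \in I by [].
have {}maxM i : i \in I -> (i <= M)%N by apply: maxM.
have cardIM : #|I :\ M| = k by move: cardI; rewrite (cardsD1 M) MI add1n => -[].
rewrite (big_setD1 _ MI) big_ord_recr /= addrC lerD ?IH //.
apply: ler_wiXn2l => //; rewrite -cardIM -[leqRHS](card_ord_prefix (ltnW (ltn_ord M))).
apply: subset_leq_card; apply/subsetP => i; rewrite !inE => /andP[neq_iM Ii].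
by rewrite ltn_neqAle maxM // andbT; apply: contraNneq neq_iM => /val_inj ->.
Qed.

End OrdinalPrefix.

Lemma one_subX (R : pzRingType) (x : R) (c : nat) :
  1 - x ^+ c = (1 - x) * \sum_(m < c) x ^+ m.
Proof. by rewrite -opprB subrX1 -mulNr opprB. Qed.

Section Selections.

Variables n r : nat.
Implicit Types T : {set 'I_n * 'I_r}.

Definition shard_replicas (j : 'I_n) T : {set 'I_r} := [set i | (j, i) \in T].

Lemma big_shard_replicas (V : Type) (idx : V) (op : Monoid.com_law idx)
    (F : 'I_n * 'I_r -> V) T :
  \big[op/idx]_(x in T) F x = \big[op/idx]_j \big[op/idx]_(i in shard_replicas j T) F (j, i).
Proof.
rewrite (pair_big_dep xpredT (fun j i => i \in shard_replicas j T) (fun j i => F (j, i))).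
by apply: eq_big => [[j i]|[]//]; rewrite inE.
Qed.

Lemma card_shard_replicas T : #|T| = (\sum_j #|shard_replicas j T|)%N.
Proof.
by rewrite -sum1_card big_shard_replicas; apply: eq_bigr => j _; rewrite sum1_card.
Qed.

Lemma card_shard_slice j T : #|[set x in T | x.1 == j]| = #|shard_replicas j T|.
Proof.
have pair_inj : injective (pair j : 'I_r -> 'I_n * 'I_r) by move=> i1 i2 [].
rewrite -(card_imset _ pair_inj); apply: eq_card => -[a i]; rewrite !inE.
apply/andP/imsetP => /= [[Tai /eqP <-] | [i' + [-> ->]]]; last by rewrite inE => ->.
by exists i; rewrite ?inE.
Qed.

Lemma card_shard_replicas_le j T : (#|shard_replicas j T| <= r)%N.
Proof. by rewrite -[leqRHS]card_ord max_card. Qed.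

Definition compact_selection T : {set 'I_n * 'I_r} :=
  [set x : 'I_n * 'I_r | (x.2 < #|shard_replicas x.1 T|)%N].

Lemma shard_replicas_compact j T :
  shard_replicas j (compact_selection T) = [set i : 'I_r | (i < #|shard_replicas j T|)%N].
Proof. by apply/setP => i; rewrite !inE. Qed.

Lemma card_compact_selection T : #|compact_selection T| = #|T|.
Proof.
rewrite !card_shard_replicas; apply: eq_bigr => j _.
by rewrite shard_replicas_compact card_ord_prefix // card_shard_replicas_le.
Qed.

End Selections.

Section SuccessProbability.

Variables (R : realFieldType) (n r : nat) (f : R).
Implicit Types (p : 'I_n -> R) (T : {set 'I_n * 'I_r}).

Lemma sum_fail_pattern_prod (g : 'I_n * 'I_r -> bool -> R) :
  \sum_(w : {ffun 'I_n * 'I_r -> bool}) fail_pattern_prob f w * \prod_x g x (w x)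
  = \prod_x (f * g x true + (1 - f) * g x false).
Proof.
rewrite (eq_bigr (fun w : {ffun _ -> bool} =>
  \prod_x ((if w x then f else 1 - f) * g x (w x)))) => [|w _]; last by rewrite big_split.
rewrite -(bigA_distr_bigA (fun x b => (if b then f else 1 - f) * g x b)) /=.
by apply: eq_bigr => x _; rewrite big_bool addrC.
Qed.

Lemma prob_some_responds (A : {pred 'I_n * 'I_r}) :
  \sum_(w : {ffun 'I_n * 'I_r -> bool})
     fail_pattern_prob f w * ([exists x in A, ~~ w x] : bool)%:R = 1 - f ^+ #|A|.
Proof.
pose g x (b : bool) : R := if x \in A then b%:R else 1.
have someE (w : {ffun 'I_n * 'I_r -> bool}) :
    ([exists x in A, ~~ w x] : bool)%:R = 1 - \prod_x g x (w x) :> R.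
  have [[x /andP[xA /negbTE wx]] | noneA] := existsP.
    by rewrite (bigD1 x) //= /g xA wx mul0r subr0.
  rewrite big1 ?subrr // => x _; rewrite /g; case: ifP => // xA.
  by case: (boolP (w x)) => // wx; case: noneA; exists x; rewrite xA.
under eq_bigr do rewrite someE mulrBr mulr1.
have total : \sum_(w : {ffun 'I_n * 'I_r -> bool}) fail_pattern_prob f w = 1.
  have := sum_fail_pattern_prod (fun _ _ => 1) => /=; under eq_bigr do rewrite big1_eq mulr1.
  by move=> ->; rewrite big1 // => x _; rewrite !mulr1 addrC subrK.
rewrite sumrB total sum_fail_pattern_prod; congr (_ - _).
rewrite -prodr_const [RHS]big_mkcond /=.
apply: eq_bigr => x _; rewrite /g; case: (x \in A).
  by rewrite mulr1 mulr0 addr0.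
by rewrite !mulr1 addrC subrK.
Qed.

Lemma success_probE p T :
  success_prob p f T = \sum_j p j * (1 - f ^+ #|shard_replicas j T|).
Proof.
apply: eq_bigr => j _; rewrite -card_shard_slice -prob_some_responds mulr_sumr.
apply: eq_bigr => w _; rewrite mulrA; congr (_ * (_ : bool)%:R).
by apply/existsP/existsP => -[x wx]; exists x; rewrite ?inE -?andbA in wx *.
Qed.

Lemma score_by_shard p T :
  (1 - f) * \sum_(x in T) rscore p f x
  = \sum_j p j * ((1 - f) * \sum_(i in shard_replicas j T) f ^+ i).
Proof.
rewrite big_shard_replicas mulr_sumr; apply: eq_bigr => j _.
by rewrite /rscore /= -mulr_suml mulrA mulrC.
Qed.

Lemma success_prob_ge_score p T :
  (forall j, 0 <= p j) -> 0 <= f -> f <= 1 ->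
  (1 - f) * \sum_(x in T) rscore p f x <= success_prob p f T.
Proof.
move=> p_ge0 f_ge0 f_le1; rewrite score_by_shard success_probE.
apply: ler_sum => j _; rewrite ler_wpM2l // one_subX ler_wpM2l ?subr_ge0 //.
exact: ler_sum_exprn_prefix.
Qed.

Lemma success_prob_compact p T :
  success_prob p f T = (1 - f) * \sum_(x in compact_selection T) rscore p f x.
Proof.
rewrite score_by_shard success_probE; apply: eq_bigr => j _.
by rewrite shard_replicas_compact one_subX big_ord_prefix // card_shard_replicas_le.
Qed.

End SuccessProbability.

Theorem theorem1 (R : realFieldType) (n r t : nat) (p : 'I_n -> R) (f : R)
    (S : {set 'I_n * 'I_r}) :
  (0 < r)%N -> (0 < t)%N -> (1 <= t * r <= n * r)%N ->
  (forall j, 0 <= p j) -> \sum_(j < n) p j = 1 ->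
  0 <= f -> f <= 1 ->
  is_rSmartRed p f (t * r) S ->
  forall T : {set 'I_n * 'I_r}, #|T| = (t * r)%N ->
    success_prob p f T <= success_prob p f S.
Proof.
move=> _ _ _ p_ge0 _ f_ge0 f_le1 [cardS topS] T cardT.
rewrite [leLHS]success_prob_compact.
apply: le_trans (success_prob_ge_score S p_ge0 f_ge0 f_le1).
rewrite ler_wpM2l ?subr_ge0 //; apply: ler_sum_top => //.
by rewrite card_compact_selection cardT cardS.
Qed.
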